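(* Consider the 4-state Jukes–Cantor coalescent mixture (CK) model on the rooted 3-taxon species tree $((a:\ell_a,b:\ell_b):\ell_{ab},\,c:\ell_c)$ with non-negative edge lengths. If $\ell_a=\ell_{ab}+\ell_c$, then the resulting probability tensor $P=(p_{ijk})$ (indices ordered $a,b,c$) is invariant under exchanging the $a$ and $c$ indices: $p_{ijk}=p_{kji}$ for all $i,j,k$.
   Context: The CK Jukes–Cantor model on a rooted species tree with edge lengths (not necessarily ultrametric): with a constant population size, a gene tree with one lineage sampled per taxon is drawn under the multispecies coalescent (lineages coalesce only within populations, i.e., edges of the species tree including the infinite root population), and a site evolves on the gene tree by the 4-state Jukes–Cantor process (rate matrix with all off-diagonal entries equal, uniform stationary distribution) started from the uniform distribution at the gene tree root, with edge lengths converted by a fixed scalar mutation rate. The site pattern probability tensor is the mixture over gene trees. The notation $(a:\ell_a,b:\ell_b):\ell_{ab}$ means the cherry $\{a,b\}$ with pendant edge lengths $\ell_a,\ell_b$ joined by an edge of length $\ell_{ab}$ to the root, and $c:\ell_c$ is a pendant edge of length $\ell_c$ from the root. *)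

From HB Require Import structures.
From mathcomp Require Import all_boot all_order all_algebra.
From mathcomp Require Import all_classical all_reals all_analysis.
Set Implicit Arguments. Unset Strict Implicit. Unset Printing Implicit Defensive.
Import Order.TTheory GRing.Theory Num.Theory.
Import numFieldNormedType.Exports.
Local Open Scope classical_set_scope.
Local Open Scope ring_scope.

Section CK.
Variable R : realType.

(* 4-state Jukes-Cantor transition probability after (coalescent) time t,
   mutation rate mu: rate matrix Q with Q x y = mu/3 (x <> y), Q x x = -mu,
   so exp(tQ) x y = 1/4 + 3/4 e^{-4 mu t/3} if x = y, 1/4 - 1/4 e^{-4 mu t/3} else. *)
Definition jc (mu t : R) (x y : 'I_4) : R :=
  if x == y then 4^-1 + 3 / 4 * expR (- (4 / 3) * mu * t)
  else 4^-1 - 4^-1 * expR (- (4 / 3) * mu * t).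

(* Site pattern probability (states xp xq xr) on the rooted gene tree
   ((p:lp, q:lq):lin, r:lr), root state uniform. *)
Definition cherry_prob (mu lp lq lin lr : R) (xp xq xr : 'I_4) : R :=
  \sum_(z < 4) \sum_(w < 4)
     4^-1 * jc mu lin z w * jc mu lp w xp * jc mu lq w xq * jc mu lr z xr.

(* Multispecies coalescent on the species tree ((a:la,b:lb):lab, c:lc)
   (edge lengths in coalescent units, pairwise coalescence rate 1,
   one lineage per taxon), mixed with the Jukes-Cantor site distribution.
   Case 1: a and b coalesce in the ab population at time s in [0,lab]
     (density e^{-s}); then with c in the root population at time t
     (density e^{-t}) after its start.
   Case 2: no coalescence in ab (prob e^{-lab}); in the root the first
     coalescence occurs at time t1 (density 3 e^{-3 t1}), each of the 3 pairs
     with prob 1/3, the last one after a further t2 (density e^{-t2}). *)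
Definition ck_case1 (mu la lb lab lc : R) (i j k : 'I_4) : \bar R :=
  (\int[lebesgue_measure]_(s in `[0%R, lab]%classic)
     \int[lebesgue_measure]_(t in `[0%R, +oo[%classic)
       (expR (- s) * expR (- t) *
        cherry_prob mu (la + s) (lb + s) (lab - s + t) (lc + t) i j k)%:E)%E.

Definition ck_case2 (mu la lb lab lc : R) (i j k : 'I_4) : \bar R :=
  let A := la + lab in let B := lb + lab in let C := lc in
  (\int[lebesgue_measure]_(t1 in `[0%R, +oo[%classic)
     \int[lebesgue_measure]_(t2 in `[0%R, +oo[%classic)
       (expR (- lab) * (3 * expR (- (3 * t1))) * expR (- t2) * 3^-1 *
        (cherry_prob mu (A + t1) (B + t1) t2 (C + t1 + t2) i j k
       + cherry_prob mu (A + t1) (C + t1) t2 (B + t1 + t2) i k j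
       + cherry_prob mu (B + t1) (C + t1) t2 (A + t1 + t2) j k i))%:E)%E.

Definition ck_tensor (mu la lb lab lc : R) (i j k : 'I_4) : R :=
  fine (ck_case1 mu la lb lab lc i j k + ck_case2 mu la lb lab lc i j k)%E.

End CK.

From HB Require Import structures.
From mathcomp Require Import all_boot all_order all_algebra.
From mathcomp Require Import all_classical all_reals all_analysis.
From mathcomp Require Import ring.
Import Order.TTheory GRing.Theory Num.Theory.
Import numFieldNormedType.Exports.
Set Implicit Arguments. Unset Strict Implicit. Unset Printing Implicit Defensive.
Local Open Scope classical_set_scope.
Local Open Scope ring_scope.

(* Write θ(x) = e^{-4μx/3} for the decay factor of a Jukes-Cantor
   edge of length x and κ = 4μ/3 for its rate.  Then jc(x,y) = (1 + h(x,y) θ)/4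
   with h(x,y) = 3 or -1, and summing out the two internal states of a rooted
   three-leaf gene tree gives a closed form for its site-pattern probability:
   a constant plus, for every pair of leaves, h times θ(distance between them),
   plus a term g(x,y,z) θ(total length).  In both coalescent scenarios of the
   CK mixture the integrand is therefore e^{-ct} times a polynomial in θ(t), and
   all integrals are explicit.  Collecting terms yields the closed form
     p_ijk = 1/64 (1 + (h_ij θ(d_ab) + h_ik θ(d_ac) + h_jk θ(d_bc)) / (1 + 2κ)
                     + g_ijk θ(L) / ((1 + κ)(1 + 2κ)))
   where d_xy are the path lengths of the species tree and L its total length.
   Exchanging the a and c indices swaps h_ij and h_jk and fixes h_ik and g_ijk,
   so P is a/c-symmetric as soon as d_ab = d_bc, i.e. when la = lab + lc. *)

Section ExponentialIntegrals.
Variable R : realType.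
Notation leb := (@lebesgue_measure R).
Local Open Scope ereal_scope.

Lemma exp_decay_scaled (r a t : R) : (0 < r)%R ->
  (a * expR (- (r * t)) = a / r * (r * expR (- r * t)))%R.
Proof. by move=> r0; rewrite mulNr; field; exact: lt0r_neq0. Qed.

Lemma integrable_exp_decay (r a : R) : (0 < r)%R ->
  leb.-integrable `[0%R, +oo[ (fun t => (a * expR (- (r * t)))%:E).
Proof.
move=> r0; have I := integrable_exponential_pdf r0.
rewrite /exponential_pdf -restrict_EFin -integrable_mkcond // in I.
apply: (eq_integrable _ _ _ _ (integrableZl _ (a / r) I)) => // t _ /=.
by rewrite -EFinM exp_decay_scaled.
Qed.

Lemma integral_exp_decay (r a : R) : (0 < r)%R ->
  \int[leb]_(t in `[0%R, +oo[) (a * expR (- (r * t)))%:E = (a / r)%:E.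
Proof.
move=> r0; have I := integrable_exponential_pdf r0.
rewrite /exponential_pdf -restrict_EFin -integrable_mkcond // in I.
under eq_integral do rewrite (exp_decay_scaled _ _ r0) EFinM.
rewrite integralZl // integral_mkcond restrict_EFin.
by rewrite integral_exponential_pdf // mule1.
Qed.

Lemma integrable_exp_decay_itv (r a L : R) : (0 < r)%R ->
  leb.-integrable `[0%R, L] (fun t => (a * expR (- (r * t)))%:E).
Proof.
move=> r0; apply: integrableS (integrable_exp_decay a r0) => //.
by move=> x /=; rewrite !in_itv /= => /andP[-> _].
Qed.

Lemma integral_exp_decay_itv (r a L : R) : (0 < r)%R -> (0 <= L)%R ->
  \int[leb]_(t in `[0%R, L]) (a * expR (- (r * t)))%:E
    = (a * (1 - expR (- (r * L))) / r)%:E.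
Proof.
move=> r0; rewrite le_eqVlt => /orP[/eqP <-|L0].
  by rewrite set_itv1 integral_set1 mulr0 oppr0 expR0 subrr mulr0 mul0r.
have I := integrable_exponential_pdf r0.
under eq_integral => t.
  rewrite inE /= in_itv /= => /andP[t0 _].
  rewrite (exp_decay_scaled _ _ r0) -(exponential_pdfE _ t0) EFinM.
  over.
rewrite integralZl //; last exact: integrableS I.
have := exponential_prob_itv0c r L0; rewrite /exponential_prob => ->.
by rewrite -[1%E]/(1%:E) -EFinB -EFinM mulNr mulrAC.
Qed.

End ExponentialIntegrals.

Section JukesCantorDecay.
Variable R : realType.
Notation leb := (@lebesgue_measure R).
Implicit Types m c t x y : R.

Definition decay m x : R := expR (- (4 / 3) * m * x).

Definition decay_rate m : R := 4 / 3 * m.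

Lemma decayD m x y : decay m (x + y) = decay m x * decay m y.
Proof. by rewrite /decay mulrDr expRD. Qed.

Lemma decayN m x : decay m (- x) = (decay m x)^-1.
Proof. by rewrite /decay mulrN expRN. Qed.

Lemma decay_neq0 m x : decay m x != 0.
Proof. by rewrite gt_eqF // expR_gt0. Qed.

Lemma shifted_rate_gt0 m c (n : nat) : 0 <= m -> 0 < c ->
  0 < c + n%:R * decay_rate m.
Proof. by move=> m0 c0; rewrite ltr_pwDl // !mulr_ge0. Qed.

Lemma exp_decayX m c t (n : nat) :
  expR (- (c * t)) * decay m t ^+ n = expR (- ((c + n%:R * decay_rate m) * t)).
Proof. by rewrite /decay -expRM_natl -expRD /decay_rate; congr expR; ring. Qed.

Lemma exp_decay_poly m c t (s : seq R) :
  expR (- (c * t)) * \sum_(n < size s) s`_n * decay m t ^+ n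
  = \sum_(n < size s) s`_n * expR (- ((c + n%:R * decay_rate m) * t)).
Proof. by rewrite mulr_sumr; apply: eq_bigr => n _; rewrite mulrCA exp_decayX. Qed.

Lemma integral_exp_decay_poly m c (s : seq R) (f : R -> R) : 0 <= m -> 0 < c ->
  (forall t, f t = expR (- (c * t)) * \sum_(n < size s) s`_n * decay m t ^+ n) ->
  (\int[leb]_(t in `[0%R, +oo[%classic) (f t)%:E
  = (\sum_(n < size s) s`_n / (c + n%:R * decay_rate m))%:E)%E.
Proof.
move=> m0 c0 fE; under eq_integral do rewrite fE exp_decay_poly -sumEFin.
rewrite integral_sum //; last first.
  by move=> n; apply: integrable_exp_decay; exact: shifted_rate_gt0.
rewrite -sumEFin; apply: eq_bigr => n _.
by rewrite integral_exp_decay //; exact: shifted_rate_gt0.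
Qed.

Lemma integral_exp_decay_poly_itv m c L (s : seq R) (f : R -> R) :
  0 <= m -> 0 < c -> 0 <= L ->
  (forall t, f t = expR (- (c * t)) * \sum_(n < size s) s`_n * decay m t ^+ n) ->
  (\int[leb]_(t in `[0%R, L]%classic) (f t)%:E
  = (\sum_(n < size s)
       s`_n * (1 - expR (- (c * L)) * decay m L ^+ n) / (c + n%:R * decay_rate m))%:E)%E.
Proof.
move=> m0 c0 L0 fE; under eq_integral do rewrite fE exp_decay_poly -sumEFin.
rewrite integral_sum //; last first.
  by move=> n; apply: integrable_exp_decay_itv; exact: shifted_rate_gt0.
rewrite -sumEFin; apply: eq_bigr => n _.
by rewrite integral_exp_decay_itv // ?exp_decayX //; exact: shifted_rate_gt0.
Qed.

End JukesCantorDecay.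

Section SitePatterns.
Variable R : realType.
Implicit Types x y z : 'I_4.

(* Signs carried by a pair of leaves: jc x y = (1 + pair_pattern x y * θ) / 4. *)
Definition pair_pattern x y : R := if x == y then 3 else -1.

(* Signs carried by three leaves jointly, in the cherry-probability closed form. *)
Definition triple_pattern x y z : R :=
  if (x == y) && (y == z) then 6
  else if [|| x == y, y == z | x == z] then -2 else 2.

Lemma pair_patternC x y : pair_pattern x y = pair_pattern y x.
Proof. by rewrite /pair_pattern eq_sym. Qed.

Lemma triple_patternC12 x y z : triple_pattern y x z = triple_pattern x y z.
Proof.
by case: x => [[|[|[|[|?]]]] ?] //; case: y => [[|[|[|[|?]]]] ?] //;
   case: z => [[|[|[|[|?]]]] ?].
Qed.

Lemma triple_patternC23 x y z : triple_pattern x z y = triple_pattern x y z.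
Proof.
by case: x => [[|[|[|[|?]]]] ?] //; case: y => [[|[|[|[|?]]]] ?] //;
   case: z => [[|[|[|[|?]]]] ?].
Qed.

Lemma triple_pattern_cyc x y z : triple_pattern y z x = triple_pattern x y z.
Proof. by rewrite triple_patternC23 triple_patternC12. Qed.

Lemma triple_pattern_rev x y z : triple_pattern z y x = triple_pattern x y z.
Proof. by rewrite triple_patternC12 triple_pattern_cyc. Qed.

Lemma jcE (m t : R) x y : jc m t x y = 4^-1 * (1 + pair_pattern x y * decay m t).
Proof. by rewrite /jc /pair_pattern /decay; case: (x == y); field. Qed.

(* Closed form of the site-pattern probability on the gene tree ((p,q),r):
   summing out the two internal states is a finite check over the 64 leaf
   states, once the four decay factors are treated as indeterminates. *)
Lemma cherry_probE (m lp lq lin lr : R) (xp xq xr : 'I_4) :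
  cherry_prob m lp lq lin lr xp xq xr = 64^-1 * (1
    + pair_pattern xp xq * decay m lp * decay m lq
    + pair_pattern xp xr * decay m lp * decay m lin * decay m lr
    + pair_pattern xq xr * decay m lq * decay m lin * decay m lr
    + triple_pattern xp xq xr * decay m lp * decay m lq * decay m lin * decay m lr).
Proof.
rewrite /cherry_prob !big_ord_recr !big_ord0 /= !jcE.
move: (decay m lp) (decay m lq) (decay m lin) (decay m lr) => dp dq din dr.
by case: xp => [[|[|[|[|?]]]] ?] //; case: xq => [[|[|[|[|?]]]] ?] //;
   case: xr => [[|[|[|[|?]]]] ?] //; rewrite /pair_pattern /triple_pattern /=; field.
Qed.

End SitePatterns.

Section CoalescentIntegrals.
Variables (R : realType) (m la lb lab lc : R) (i j k : 'I_4).
Hypothesis m0 : 0 <= m.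

Local Notation θ := (decay m).
Local Notation h := (@pair_pattern R).
Local Notation g := (@triple_pattern R).
Local Notation K := (decay_rate m).
Local Notation D := (1 + 2 * decay_rate m).

Let D_neq0 : D != 0.
Proof. by rewrite lt0r_neq0 // (shifted_rate_gt0 2 m0 ltr01). Qed.

Let K1_neq0 : 1 + K != 0.
Proof. by rewrite lt0r_neq0 // -[K]mul1r (shifted_rate_gt0 1 m0 ltr01). Qed.

Let K3_neq0 (n : nat) : 3 + n%:R * K != 0.
Proof. by rewrite lt0r_neq0 // shifted_rate_gt0. Qed.

(* Case 1, inner integral: a and b have coalesced at time s in the ab
   population; the time t until c joins only enters through θ(t)^2. *)
Lemma case1_inner (s : R) :
  (\int[lebesgue_measure]_(t in `[0%R, +oo[%classic)
     (expR (- s) * expR (- t) *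
      cherry_prob m (la + s) (lb + s) (lab - s + t) (lc + t) i j k)%:E)%E
  = (expR (- s) / 64 * (1 + h i j * θ (la + s) * θ (lb + s)
      + (h i k * θ (la + s) + h j k * θ (lb + s) + g i j k * θ (la + s) * θ (lb + s))
        * θ (lab - s) * θ lc / D))%:E.
Proof.
rewrite (@integral_exp_decay_poly _ m 1
  [:: expR (- s) / 64 * (1 + h i j * θ (la + s) * θ (lb + s)); 0;
      expR (- s) / 64 * (h i k * θ (la + s) + h j k * θ (lb + s)
        + g i j k * θ (la + s) * θ (lb + s)) * θ (lab - s) * θ lc]) //.
  congr EFin; rewrite !big_ord_recr big_ord0 /=.
  by rewrite mul0r addr0 divr1 mul0r add0r addr0; field.
move=> t; rewrite !big_ord_recr big_ord0 /= cherry_probE !decayD mul1r; ring.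
Qed.

Lemma ck_case1E : 0 <= lab ->
  ck_case1 m la lb lab lc i j k = (64^-1 * (
      (1 - expR (- lab)) * (1 + (h i k * θ la + h j k * θ lb) * θ lab * θ lc / D)
    + g i j k * θ la * θ lb * θ lab * θ lc * (1 - expR (- lab) * θ lab) / (D * (1 + K))
    + h i j * θ la * θ lb * (1 - expR (- lab) * θ lab ^+ 2) / D))%:E.
Proof.
move=> lab0; rewrite /ck_case1; under eq_integral do rewrite case1_inner.
rewrite (@integral_exp_decay_poly_itv _ m 1 lab
  [:: 64^-1 * (1 + (h i k * θ la + h j k * θ lb) * θ lab * θ lc / D);
      64^-1 * g i j k * θ la * θ lb * θ lab * θ lc / D;
      64^-1 * h i j * θ la * θ lb]) //.
  congr EFin; rewrite !big_ord_recr big_ord0 /= !mul1r mul0r addr0 divr1 add0r.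
  by field; rewrite D_neq0 K1_neq0.
move=> s; rewrite !big_ord_recr big_ord0 /= -[lab - s]/(lab + - s) !decayD decayN mul1r.
by field; rewrite D_neq0 decay_neq0.
Qed.

(* Averaging
   over the three possible first pairs symmetrizes the patterns. *)
Lemma case2_inner (t1 : R) :
  (\int[lebesgue_measure]_(t2 in `[0%R, +oo[%classic)
     (expR (- lab) * (3 * expR (- (3 * t1))) * expR (- t2) * 3^-1 *
      (cherry_prob m (la + lab + t1) (lb + lab + t1) t2 (lc + t1 + t2) i j k
     + cherry_prob m (la + lab + t1) (lc + t1) t2 (lb + lab + t1 + t2) i k j
     + cherry_prob m (lb + lab + t1) (lc + t1) t2 (la + lab + t1 + t2) j k i))%:E)%E
  = (expR (- lab) * expR (- (3 * t1)) / 64 * (3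
      + (h i j * θ (la + lab + t1) * θ (lb + lab + t1)
         + h i k * θ (la + lab + t1) * θ (lc + t1)
         + h j k * θ (lb + lab + t1) * θ (lc + t1)) * (1 + 2 / D)
      + 3 * g i j k * θ (la + lab + t1) * θ (lb + lab + t1) * θ (lc + t1) / D))%:E.
Proof.
pose S := h i j * θ (la + lab + t1) * θ (lb + lab + t1)
  + h i k * θ (la + lab + t1) * θ (lc + t1) + h j k * θ (lb + lab + t1) * θ (lc + t1).
pose X := θ (la + lab + t1) * θ (lb + lab + t1) * θ (lc + t1).
rewrite (@integral_exp_decay_poly _ m 1
  [:: expR (- lab) * expR (- (3 * t1)) / 64 * (3 + S); 0;
      expR (- lab) * expR (- (3 * t1)) / 64 * (2 * S + 3 * g i j k * X)]) //.
  congr EFin; rewrite !big_ord_recr big_ord0 /= mul0r addr0 divr1 mul0r add0r addr0.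
  by rewrite /S /X; field.
move=> t2; rewrite !big_ord_recr big_ord0 /= !cherry_probE /S /X.
rewrite (pair_patternC _ k j) (pair_patternC _ j i) (pair_patternC _ k i).
rewrite (triple_patternC23 _ i j k) (triple_pattern_cyc _ i j k) !decayD mul1r.
by field.
Qed.

Lemma ck_case2E :
  ck_case2 m la lb lab lc i j k = (expR (- lab) / 64 * (1
    + (h i j * θ (la + lab) * θ (lb + lab) + h i k * θ (la + lab) * θ lc
       + h j k * θ (lb + lab) * θ lc) / D
    + g i j k * θ (la + lab) * θ (lb + lab) * θ lc / (D * (1 + K))))%:E.
Proof.
rewrite /ck_case2 /=; under eq_integral do rewrite case2_inner.
rewrite (@integral_exp_decay_poly _ m 3
  [:: expR (- lab) / 64 * 3; 0;
      expR (- lab) / 64 * (h i j * θ (la + lab) * θ (lb + lab) + h i k * θ (la + lab) * θ lc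
       + h j k * θ (lb + lab) * θ lc) * (1 + 2 / D);
      expR (- lab) / 64 * 3 * g i j k * θ (la + lab) * θ (lb + lab) * θ lc / D]) //.
  congr EFin; rewrite !big_ord_recr big_ord0 /= mul0r addr0 mul0r add0r addr0.
  by field; rewrite D_neq0 K1_neq0 (K3_neq0 2) (K3_neq0 3).
move=> t1; rewrite !big_ord_recr big_ord0 /= !decayD.
by field.
Qed.

Lemma ck_tensorE : 0 <= lab ->
  ck_tensor m la lb lab lc i j k = 64^-1 * (1
    + (h i j * θ (la + lb) + h i k * θ (la + lab + lc) + h j k * θ (lb + lab + lc)) / D
    + g i j k * θ (la + lb + lab + lc) / (D * (1 + K))).
Proof.
move=> lab0; rewrite /ck_tensor ck_case1E // ck_case2E -EFinD /= !decayD.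
by field; rewrite D_neq0 K1_neq0.
Qed.

End CoalescentIntegrals.

Unset Implicit Arguments.

Theorem propositionA1 (R : realType) (mu la lb lab lc : R) :
  0 <= mu -> 0 <= la -> 0 <= lb -> 0 <= lab -> 0 <= lc ->
  la = lab + lc ->
  forall i j k : 'I_4,
    ck_tensor mu la lb lab lc i j k = ck_tensor mu la lb lab lc k j i.
Proof.
move=> mu0 _ _ lab0 _ la_eq i j k.
rewrite !ck_tensorE // triple_pattern_rev.
rewrite (pair_patternC _ k j) (pair_patternC _ k i) (pair_patternC _ j i).
have d_ab_bc : la + lb = lb + lab + lc by rewrite la_eq; ring.
by rewrite d_ab_bc; ring.
Qed.
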